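(* Let $A\subseteq\mathbb N_0\times\mathbb S$ be a Schnorr test for a computable forecasting system $\varphi$ such that $A_n$ is a partial cut for every $n\in\mathbb N_0$. Then there is a growth function $\varsigma:\mathbb N_0\to\mathbb N_0$ such that $$\sum_{n=0}^{\infty}2^{k}\,\overline P_\varphi\big([A_n^{\ge\varsigma(k)}]\big)\le2^{-k}\quad\text{for all }k\in\mathbb N_0.$$
   Context: $\mathbb N_0=\{0,1,\dots\}$; $\Omega=\{0,1\}^{\mathbb N}$; $\mathbb S$ finite binary strings, $|s|$ length, $\omega^n$ first $n$ entries; $[s]=\{\omega:\omega^{|s|}=s\}$, $[A]=\bigcup_{s\in A}[s]$; a partial cut is a prefix-free subset of $\mathbb S$. For $A\subseteq\mathbb N_0\times\mathbb S$: $A_n=\{s:(n,s)\in A\}$, $A_n^{<\ell}=\{s\in A_n:|s|<\ell\}$, $A_n^{\ge\ell}=\{s\in A_n:|s|\ge\ell\}$. $\mathcal I$: nonempty closed subintervals of $[0,1]$; $\overline E_I(f)=\max_{p\in I}[pf(1)+(1-p)f(0)]$. Forecasting system $\varphi:\mathbb S\to\mathcal I$, $\underline\varphi=\min\varphi$, $\overline\varphi=\max\varphi$; computable if $\underline\varphi,\overline\varphi$ are computable real maps (approximable by a recursive rational map to within $2^{-N}$). Supermartingale: $M:\mathbb S\to\mathbb R$ with $\overline E_{\varphi(s)}(M(s\,\cdot))\le M(s)$. $\overline P_\varphi(G)=\inf\{M(\square):M\text{ supermartingale for }\varphi,\ \liminf_nM(\omega^n)\ge\mathbb 1_G(\omega)\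 \forall\omega\}$. A Schnorr test for $\varphi$ is a recursive $A\subseteq\mathbb N_0\times\mathbb S$ with $\overline P_\varphi([A_n])\le2^{-n}$ for all $n$, and a recursive $e:\mathbb N_0^2\to\mathbb N_0$ with $\overline P_\varphi([A_n]\setminus[A_n^{<\ell}])\le2^{-N}$ for all $(N,n)$ and $\ell\ge e(N,n)$. A growth function is a recursive, non-decreasing, unbounded map $\mathbb N_0\to\mathbb N_0$. *)

From HB Require Import structures.
From mathcomp Require Import all_boot all_order all_algebra.
From mathcomp Require Import all_classical all_reals all_analysis.
Set Implicit Arguments. Unset Strict Implicit. Unset Printing Implicit Defensive.
Import Order.TTheory GRing.Theory Num.Theory.
Local Open Scope classical_set_scope.
Local Open Scope ring_scope.

(* A deep embedding of (partial) mu-recursive functions on argument lists.   *)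
(* Missing arguments default to 0.                                           *)
Inductive prf : Type :=
| PZero : prf
| PSucc : prf
| PProj : nat -> prf
| PComp : prf -> list prf -> prf
| PRec  : prf -> prf -> prf
| PMin  : prf -> prf.

Inductive peval : prf -> seq nat -> nat -> Prop :=
| ev_zero v : peval PZero v 0
| ev_succ v : peval PSucc v (nth 0 v 0).+1
| ev_proj i v : peval (PProj i) v (nth 0 v i)
| ev_comp f gs v ys y :
    peval_list gs v ys -> peval f ys y -> peval (PComp f gs) v y
| ev_rec0 f g v y : peval f v y -> peval (PRec f g) (0 :: v) y
| ev_recS f g n v r y :
    peval (PRec f g) (n :: v) r -> peval g [:: n, r & v] y ->
    peval (PRec f g) (n.+1 :: v) y
| ev_recnil f g y : peval (PRec f g) [:: 0] y -> peval (PRec f g) [::] y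
| ev_min f v n :
    peval f (n :: v) 0 ->
    (forall m, (m < n)%N -> exists2 k, (0 < k)%N & peval f (m :: v) k) ->
    peval (PMin f) v n
with peval_list : list prf -> seq nat -> seq nat -> Prop :=
| evl_nil v : peval_list [::] v [::]
| evl_cons g gs v y ys :
    peval g v y -> peval_list gs v ys -> peval_list (g :: gs) v (y :: ys).

Definition recursive1 (f : nat -> nat) : Prop :=
  exists p, forall n, peval p [:: n] (f n).
Definition recursive2 (f : nat -> nat -> nat) : Prop :=
  exists p, forall m n, peval p [:: m; n] (f m n).

(* finite binary strings are [seq bool]; true = 1, false = 0 *)
(* a bijective (and computable) coding of binary strings by naturals *)
Fixpoint code (s : seq bool) : nat :=
  match s with [::] => 0 | b :: t => (code t).*2 + b + 1 end.

Definition Omega := nat -> bool.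
Definition pre (w : Omega) (n : nat) : seq bool := mkseq w n.

Definition cyl (A : set (seq bool)) : set Omega :=
  [set w | exists2 s, A s & pre w (size s) = s].

Definition partial_cut (A : set (seq bool)) : Prop :=
  forall s t, A s -> A t -> prefix s t -> s = t.

Definition sec (A : nat -> seq bool -> bool) (n : nat) : set (seq bool) :=
  [set s | A n s].
Definition sec_lt (A : nat -> seq bool -> bool) (n l : nat) : set (seq bool) :=
  [set s | A n s /\ (size s < l)%N].
Definition sec_ge (A : nat -> seq bool -> bool) (n l : nat) : set (seq bool) :=
  [set s | A n s /\ (l <= size s)%N].

Section Forecast.
Variable R : realType.

(* phi(s) = [lo s, hi s], a nonempty closed subinterval of [0,1] *)
Definition forecasting_system (lo hi : seq bool -> R) : Prop :=
  forall s, 0 <= lo s /\ lo s <= hi s /\ hi s <= 1.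

Definition uexp (a b : R) (f : bool -> R) : R :=
  sup [set x | exists2 p, a <= p <= b & x = p * f true + (1 - p) * f false].

Definition supermartingale (lo hi : seq bool -> R) (M : seq bool -> R) : Prop :=
  forall s, uexp (lo s) (hi s) (fun b => M (rcons s b)) <= M s.

Definition indic (G : set Omega) (w : Omega) : R :=
  if pselect (G w) then 1 else 0.

Definition upper_prob (lo hi : seq bool -> R) (G : set Omega) : \bar R :=
  ereal_inf [set ((M [::])%:E) | M in
    [set M | supermartingale lo hi M /\
      forall w, ((indic G w)%:E <= limn_einf (fun n => (M (pre w n))%:E))%E]].

Definition computable_real_map (f : seq bool -> R) : Prop :=
  exists sg nu de : nat -> nat -> nat,
    [/\ recursive2 sg, recursive2 nu, recursive2 de &
      forall s N, `| (-1) ^+ (sg (code s) N) * (nu (code s) N)%:R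
                      / ((de (code s) N).+1)%:R - f s | <= 2 ^- N].

Definition computable_fs (lo hi : seq bool -> R) : Prop :=
  computable_real_map lo /\ computable_real_map hi.

Definition recursive_set (A : nat -> seq bool -> bool) : Prop :=
  exists p, forall n s, peval p [:: n; code s] (A n s : nat).

Definition schnorr_test (lo hi : seq bool -> R) (A : nat -> seq bool -> bool) : Prop :=
  [/\ recursive_set A,
      (forall n, (upper_prob lo hi (cyl (sec A n)) <= (2 ^- n)%:E)%E) &
      exists e : nat -> nat -> nat, recursive2 e /\
        forall N n l, (e N n <= l)%N ->
          (upper_prob lo hi (cyl (sec A n) `\` cyl (sec_lt A n l))
             <= (2 ^- N)%:E)%E].

End Forecast.

Definition growth_function (f : nat -> nat) : Prop :=
  [/\ recursive1 f, {homo f : m n / (m <= n)%N} &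
      forall m, exists k, (m <= f k)%N].

(* Take [vs k] above [e (n + T) n] for every [n < T = 2k + 2], where [e] is the
   convergence rate of the Schnorr test. Since [A_n] is a partial cut, [[A_n^{>=l}]]
   is contained in [[A_n] \ [A_n^{<l}]], so the [n]-th upper probability is at most
   [2^-(n+T)] when [n < T], and at most [2^-n] (the bound on [[A_n]]) otherwise; the
   two geometric tails add up to [4 * 2^-T = 2^-2k]. Nonnegativity of upper
   probabilities comes from following a supermartingale along a branch on which
   it never increases. *)

From Pilot Require Import Defs.
From HB Require Import structures.
From mathcomp Require Import all_boot all_order all_algebra.
From mathcomp Require Import all_classical all_reals all_analysis.
From mathcomp Require Import ring lra.
Set Implicit Arguments.
Unset Strict Implicit.
Unset Printing Implicit Defensive.
Import Order.TTheory GRing.Theory Num.Theory.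
Local Open Scope classical_set_scope.
Local Open Scope ring_scope.

Lemma peval_comp1 f g v y z :
  peval g v y -> peval f [:: y] z -> peval (PComp f [:: g]) v z.
Proof. by move=> gy fz; apply: ev_comp fz; apply: evl_cons gy (evl_nil _). Qed.

Lemma peval_comp2 f g1 g2 v y1 y2 z :
  peval g1 v y1 -> peval g2 v y2 -> peval f [:: y1; y2] z ->
  peval (PComp f [:: g1; g2]) v z.
Proof.
move=> g1y g2y fz; apply: ev_comp fz.
by apply: evl_cons g1y _; apply: evl_cons g2y (evl_nil _).
Qed.

Lemma peval_rec_sum pf pg v b (h : nat -> nat) :
  peval pf v b -> (forall n r, peval pg [:: n, r & v] (r + h n)%N) ->
  forall m, peval (PRec pf pg) (m :: v) (b + \sum_(0 <= i < m) h i)%N.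
Proof.
move=> pfb pgh; elim=> [|m IH]; first by rewrite big_geq // addn0; exact: ev_rec0.
by apply: ev_recS IH _; rewrite big_nat_recr //= addnA; exact: pgh.
Qed.

Lemma recursive2_fst : recursive2 (fun a _ => a).
Proof. by exists (PProj 0) => m n; exact: ev_proj. Qed.

Lemma recursive2_snd : recursive2 (fun _ b => b).
Proof. by exists (PProj 1) => m n; exact: ev_proj. Qed.

Lemma recursive2_succ f : recursive2 f -> recursive2 (fun a b => (f a b).+1).
Proof.
by move=> [p pf]; exists (PComp PSucc [:: p]) => m n; apply: peval_comp1 (ev_succ _).
Qed.

Lemma recursive2_comp f g h : recursive2 f -> recursive2 g -> recursive2 h ->
  recursive2 (fun a b => f (g a b) (h a b)).
Proof.
move=> [pf evf] [pg evg] [ph evh]; exists (PComp pf [:: pg; ph]) => m n.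
exact: peval_comp2.
Qed.

Lemma recursive2_addn : recursive2 addn.
Proof.
exists (PRec (PProj 0) (PComp PSucc [:: PProj 1])) => m n.
have -> : (m + n = n + \sum_(0 <= i < m) 1)%N.
  by rewrite sum_nat_const_nat muln1 subn0 addnC.
apply: peval_rec_sum; first exact: ev_proj.
by move=> i r; apply: peval_comp1; [exact: ev_proj | rewrite addn1; exact: ev_succ].
Qed.

Lemma recursive2_double f : recursive2 f -> recursive2 (fun a b => (f a b).*2).
Proof.
move=> rf; have := recursive2_comp recursive2_addn rf rf.
by congr recursive2; apply/funext=> a; apply/funext=> b; rewrite addnn.
Qed.

Lemma recursive2_sum f : recursive2 f ->
  recursive2 (fun m b => \sum_(0 <= i < m) f i b).
Proof.
move=> [pf evf]; have [padd evadd] := recursive2_addn.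
exists (PRec PZero (PComp padd [:: PProj 1; PComp pf [:: PProj 0; PProj 2]])).
move=> m b; rewrite -[X in peval _ _ X]add0n; apply: peval_rec_sum; first exact: ev_zero.
move=> n r; apply: peval_comp2 (evadd _ _); first exact: ev_proj.
by apply: peval_comp2 (evf _ _); exact: ev_proj.
Qed.

Lemma recursive1_diag f : recursive2 f -> recursive1 (fun a => f a a).
Proof.
move=> [pf evf]; exists (PComp pf [:: PProj 0; PProj 0]) => n.
by apply: peval_comp2 (evf _ _); exact: ev_proj.
Qed.

(* The outer sum makes [schnorr_growth e] nondecreasing and unbounded; its [k]-th
   summand dominates [e (n + 2k + 2) n] for all [n < 2k + 2]. *)
Definition schnorr_growth (e : nat -> nat -> nat) (k : nat) : nat :=
  \sum_(0 <= j < k.+1) (j + \sum_(0 <= i < j.*2.+2) e (i + j.*2.+2)%N i).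

Lemma recursive1_schnorr_growth e : recursive2 e -> recursive1 (schnorr_growth e).
Proof.
move=> re.
have bound : recursive2 (fun j (_ : nat) => j.*2.+2).
  exact/recursive2_succ/recursive2_succ/recursive2_double/recursive2_fst.
have term : recursive2 (fun i j => e (i + j.*2.+2)%N i).
  exact: recursive2_comp re (recursive2_comp recursive2_addn recursive2_fst
    (recursive2_comp bound recursive2_snd recursive2_snd)) recursive2_fst.
have summand :
    recursive2 (fun j (_ : nat) => j + \sum_(0 <= i < j.*2.+2) e (i + j.*2.+2)%N i).
  exact: recursive2_comp recursive2_addn recursive2_fst
    (recursive2_comp (recursive2_sum term) bound recursive2_fst).
exact: recursive1_diag (recursive2_comp (recursive2_sum summand)
  (recursive2_succ recursive2_fst) recursive2_snd).
Qed.

Lemma leq_term_sum_nat (F : nat -> nat) i m :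
  (i < m)%N -> (F i <= \sum_(0 <= j < m) F j)%N.
Proof.
by move=> im; rewrite (bigD1_seq i) ?mem_index_iota ?iota_uniq //= leq_addr.
Qed.

Lemma leq_sum_nat_range (F : nat -> nat) m n :
  (m <= n)%N -> (\sum_(0 <= j < m) F j <= \sum_(0 <= j < n) F j)%N.
Proof. by move=> mn; rewrite (big_cat_nat (leq0n m) mn) leq_addr. Qed.

Section SchnorrGrowth.
Variable e : nat -> nat -> nat.

Lemma schnorr_growth_homo : {homo schnorr_growth e : m n / (m <= n)%N}.
Proof. by move=> m n mn; apply: leq_sum_nat_range. Qed.

Lemma leq_schnorr_growth k : (k <= schnorr_growth e k)%N.
Proof.
by rewrite /schnorr_growth (leq_trans _ (leq_term_sum_nat _ (ltnSn k))) ?leq_addr.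
Qed.

Lemma schnorr_growth_ge_tail k n :
  (n < k.*2.+2)%N -> (e (n + k.*2.+2)%N n <= schnorr_growth e k)%N.
Proof.
move=> nk; rewrite /schnorr_growth (leq_trans _ (leq_term_sum_nat _ (ltnSn k))) //.
exact: leq_trans (leq_term_sum_nat (fun i => e (i + k.*2.+2)%N i) nk) (leq_addl _ _).
Qed.

Lemma growth_function_schnorr_growth :
  recursive2 e -> growth_function (schnorr_growth e).
Proof.
move=> re; split; [exact: recursive1_schnorr_growth | exact: schnorr_growth_homo |].
by move=> m; exists m; exact: leq_schnorr_growth.
Qed.

End SchnorrGrowth.

Section UpperProbability.
Variable R : realType.

Lemma uexp_ge (a b p : R) (f : bool -> R) : 0 <= a -> b <= 1 -> a <= p <= b ->
  p * f true + (1 - p) * f false <= uexp a b f.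
Proof.
move=> a0 b1 p_ab; apply: sup_upper_bound; last by exists p.
split; first by exists (p * f true + (1 - p) * f false); exists p.
exists (`|f true| + `|f false|) => _ [q /andP[aq qb] ->].
have q0 : 0 <= q by exact: le_trans aq.
have q1 : q <= 1 by exact: le_trans b1.
have bound_true : q * f true <= `|f true|.
  by rewrite (le_trans (ler_wpM2l q0 (ler_norm _))) // ler_piMl.
have bound_false : (1 - q) * f false <= `|f false|.
  by rewrite (le_trans (ler_wpM2l _ (ler_norm _))) ?ler_piMl ?subr_ge0 ?gerBl.
exact: lerD.
Qed.

Lemma convex_comb_le (p x y z : R) : 0 <= p <= 1 ->
  p * x + (1 - p) * y <= z -> x <= z \/ y <= z.
Proof.
move=> /andP[p0 p1] le_z; case: (lerP x z) => [|zx]; [by left | right].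
rewrite leNgt; apply/negP => zy.
have : 0 <= p * (x - z) by rewrite mulr_ge0 // subr_ge0 ltW.
have [p_eq1|p_neq1] := eqVneq p 1; first by subst p; lra.
have : 0 < (1 - p) * (y - z) by rewrite mulr_gt0 // subr_gt0 // lt_neqAle p_neq1.
lra.
Qed.

Definition branch_prefix (c : seq bool -> bool) (n : nat) : seq bool :=
  iter n (fun s => rcons s (c s)) [::].

Definition branch (c : seq bool -> bool) : Omega := fun n => c (branch_prefix c n).

Lemma pre_branch c n : pre (branch c) n = branch_prefix c n.
Proof. by elim: n => //= n IH; rewrite /pre mkseqS; congr rcons. Qed.

Lemma limn_einf_le (u : (\bar R)^nat) (c : \bar R) :
  (forall n, (u n <= c)%E) -> (limn_einf u <= c)%E.
Proof.
move=> le_uc; rewrite limn_einf_lim; apply: lime_le; first exact: is_cvg_einfs.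
apply: nearW => n; apply: le_trans (le_uc n).
by apply: ereal_inf_lbound; exists n => /=.
Qed.

Variables lo hi : seq bool -> R.
Hypothesis fs : forecasting_system lo hi.

Lemma supermartingale_child_le M s : supermartingale lo hi M ->
  M (rcons s true) <= M s \/ M (rcons s false) <= M s.
Proof.
have [lo0 [lohi hi1]] := fs s; move=> /(_ s) le_Ms; apply: (@convex_comb_le (lo s)).
  by rewrite lo0 (le_trans lohi).
by apply: le_trans le_Ms; apply: uexp_ge; rewrite // lexx.
Qed.

Lemma supermartingale_branch_le M : supermartingale lo hi M ->
  exists w, forall n, M (pre w n) <= M [::].
Proof.
move=> sM; exists (branch (fun s => M (rcons s true) <= M s)) => n.
rewrite pre_branch; elim: n => //= n; apply: le_trans; set s := branch_prefix _ n.
case: (boolP (M (rcons s true) <= M s)) => // /negbTE le_true_F.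
by have := supermartingale_child_le s sM; rewrite le_true_F => -[].
Qed.

Lemma supermartingale_root_ge0 M : supermartingale lo hi M ->
  (forall w, (0 <= limn_einf (fun n => (M (pre w n))%:E))%E) -> 0 <= M [::].
Proof.
move=> /supermartingale_branch_le [w le_wM] /(_ w) liminf_ge0.
by rewrite -lee_fin (le_trans liminf_ge0) // limn_einf_le // => n; rewrite lee_fin.
Qed.

Lemma indic_le (G H : set Omega) w :
  G `<=` H -> Defs.indic R G w <= Defs.indic R H w.
Proof.
rewrite /Defs.indic => GH.
case: (pselect (G w)) => [Gw|nGw]; last by case: (pselect (H w)).
by case: (pselect (H w)) => // nHw; case: (nHw (GH _ Gw)).
Qed.

Lemma upper_prob_ge0 G : (0 <= upper_prob lo hi G)%E.
Proof.
apply: le_ereal_inf_tmp => _ [M [sM liminf_ge] <-]; rewrite lee_fin.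
apply: supermartingale_root_ge0 sM _ => w; apply: le_trans (liminf_ge w).
by rewrite lee_fin /Defs.indic; case: pselect.
Qed.

Lemma le_upper_prob G H :
  G `<=` H -> (upper_prob lo hi G <= upper_prob lo hi H)%E.
Proof.
move=> GH; apply: ereal_inf_le_tmp => _ [M [sM liminf_ge] <-]; exists M => //.
split=> // w; apply: le_trans (liminf_ge w); rewrite lee_fin; exact: indic_le.
Qed.

End UpperProbability.

Lemma take_pre w m n : (m <= n)%N -> take m (pre w n) = pre w m.
Proof. by move=> mn; rewrite /pre /mkseq -map_take take_iota (minn_idPl mn). Qed.

Section Cylinders.
Variables (A : nat -> seq bool -> bool) (n l : nat).

Lemma cyl_sec_ge_sub : cyl (sec_ge A n l) `<=` cyl (sec A n).
Proof. by move=> w [s [As _] ws]; exists s. Qed.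

Lemma cyl_sec_ge_sub_diff : partial_cut (sec A n) ->
  cyl (sec_ge A n l) `<=` cyl (sec A n) `\` cyl (sec_lt A n l).
Proof.
move=> pcut w [s [As ls] ws]; split; first by exists s.
move=> [t [At lt] wt]; have ts : (size t <= size s)%N by apply: ltnW (leq_trans lt ls).
have t_eq_s : t = s by apply: pcut; rewrite // prefixE -ws take_pre // wt.
by move: lt; rewrite t_eq_s ltnNge ls.
Qed.

End Cylinders.

Section GeometricBounds.
Variable R : realType.

Lemma sum_exp2N_le a b : \sum_(a <= i < b) (2 : R) ^- i <= 2 ^- a * 2.
Proof.
have telescope m : \sum_(a <= i < a + m) (2 : R) ^- i + 2 ^- (a + m) * 2 = 2 ^- a * 2.
  elim: m => [|m IH]; first by rewrite addn0 big_geq // add0r.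
  rewrite addnS big_nat_recr ?leq_addr //= -addrA -[RHS]IH; congr (_ + _).
  by rewrite exprS invfM; field.
have [ba|ab] := leqP b a; first by rewrite big_geq // mulr_ge0 // invr_ge0 exprn_ge0.
rewrite -(subnKC (ltnW ab)) -[X in _ <= X](telescope (b - a)%N) lerDl.
by rewrite mulr_ge0 // invr_ge0 exprn_ge0.
Qed.

Definition split_geom (T n : nat) : R :=
  if (n < T)%N then 2 ^- (n + T) else 2 ^- n.

Lemma split_geom_ge0 T n : 0 <= split_geom T n.
Proof. by rewrite /split_geom; case: ifP; rewrite invr_ge0 exprn_ge0. Qed.

Lemma sum_split_geom_le T m : \sum_(0 <= n < m) split_geom T n <= 2 ^- T * 4.
Proof.
apply: le_trans (_ : \sum_(0 <= n < maxn m T) split_geom T n <= _).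
  rewrite (big_cat_nat (leq0n m) (leq_maxl m T)) lerDl.
  by apply: sumr_ge0 => n _; exact: split_geom_ge0.
rewrite (big_cat_nat (leq0n T) (leq_maxr m T)) /=.
have -> : 2 ^- T * 4 = 2 ^- T * 2 + 2 ^- T * 2 :> R by ring.
apply: lerD.
  rewrite (eq_big_nat _ _ (F2 := fun n => 2 ^- (n + T))); last first.
    by move=> n /andP[_ nT]; rewrite /split_geom nT.
  have -> : \sum_(0 <= n < T) 2 ^- (n + T) = \sum_(T <= i < T + T) (2 : R) ^- i.
    by rewrite -[T in RHS]add0n big_addn addnK.
  exact: sum_exp2N_le.
rewrite (eq_big_nat _ _ (F2 := fun n => 2 ^- n)) ?sum_exp2N_le //.
by move=> n /andP[Tn _]; rewrite /split_geom ltnNge Tn.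
Qed.

Lemma nneseries_le (u : (\bar R)^nat) (c : \bar R) : (forall n, (0 <= u n)%E) ->
  (forall m, (\sum_(0 <= n < m) u n <= c)%E) -> (\sum_(0 <= n <oo) u n <= c)%E.
Proof.
move=> u0 partial_le; apply: lime_le; first exact: is_cvg_nneseries.
exact: nearW.
Qed.

End GeometricBounds.

Theorem lemma8p4 (R : realType) (lo hi : seq bool -> R)
  (A : nat -> seq bool -> bool) :
  forecasting_system lo hi -> computable_fs lo hi ->
  schnorr_test lo hi A ->
  (forall n, partial_cut (sec A n)) ->
  exists vs : nat -> nat, growth_function vs /\
    forall k : nat,
      (\sum_(0 <= n <oo) ((2 ^+ k)%:E * upper_prob lo hi (cyl (sec_ge A n (vs k))))
        <= (2 ^- k)%:E)%E.
Proof.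
move=> fs _ [_ An_le [e [re An_tail]]] pcut.
exists (schnorr_growth e); split; first exact: growth_function_schnorr_growth.
move=> k; set T := k.*2.+2.
have term_le n : (upper_prob lo hi (cyl (sec_ge A n (schnorr_growth e k)))
    <= (split_geom R T n)%:E)%E.
  rewrite /split_geom; case: ifPn => [nT | _].
    apply: le_trans (le_upper_prob lo hi (cyl_sec_ge_sub_diff (pcut n))) _.
    exact/An_tail/schnorr_growth_ge_tail.
  exact: le_trans (le_upper_prob lo hi (@cyl_sec_ge_sub _ _ _)) (An_le n).
apply: nneseries_le => [n|m].
  by rewrite mule_ge0 ?lee_fin ?exprn_ge0 ?upper_prob_ge0.
apply: le_trans (_ : \sum_(0 <= n < m) (2 ^+ k * split_geom R T n)%:E <= _)%E.
  by apply: lee_sum => n _; rewrite EFinM lee_wpmul2l ?lee_fin ?exprn_ge0.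
rewrite sumEFin lee_fin -mulr_sumr.
apply: le_trans (ler_wpM2l (exprn_ge0 _ _) (sum_split_geom_le R T m)) _ => //.
suff -> : 2 ^+ k * (2 ^- T * 4) = 2 ^- k :> R by [].
by rewrite /T -addnn !exprS exprD !invfM; field.
Qed.
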